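(* Let $\rho_{\rm up},\rho_{\rm low}\in[0,1]$. Suppose there is an element-based generator $\mathds{G}_{\rm vanilla}$ that, for any countable collection $\mathcal{L}$, generates from $\mathcal{L}$ in the limit with element-based upper (respectively lower) density $\rho_{\rm up}$ (respectively $\rho_{\rm low}$) under enumerations with no noise and no omissions. Then there exists an element-based generator $\mathds{G}_{\rm tolerant}$ that, for any countable collection $\mathcal{L}$, generates from $\mathcal{L}$ in the limit with element-based upper (respectively lower) density $\rho_{\rm up}$ (respectively $\rho_{\rm low}$) under enumerations with finite noise and finite omissions.
   Context: The universe is $U=\mathbb{N}$ with its natural order. A language is an infinite subset of $U$; a collection is a countable family of languages. For $A,B\subseteq\mathbb{N}$ with $B=\{b_1<b_2<\cdots\}$, $\mu_{\rm up}(A,B)=\limsup_n\frac1n|A\cap\{b_1,\dots,b_n\}|$ and $\mu_{\rm low}(A,B)=\liminf_n\frac1n|A\cap\{b_1,\dots,b_n\}|$. An enumeration of $K$ with no noise and no omissions lists every element of $K$ exactly once and nothing else; an enumeration of $K$ with finite noise and finite omissions is a sequence of distinct elements listing every element of some $\hat K\subseteq K$ with $|K\setminus\hat K|<\infty$ and only finitely many elements outside $\hat K$. An element-based generator outputs at step $n$, from $x_1,\dots,x_n$ and knowledge of $\mathcal{L}$ (not $K$), an element $w_n\notin\{x_1,\dots,x_n,w_1,\dots,w_{n-1}\}$. It generates in the limit if for every $K\in\mathcal{L}$ and admissible enumeration there is $n^\star$ with $w_n\in K$ for $n\ge n^\star$; with element-based upper (lower) density $\rho$ if additionally $\mu_{\rm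 up}(W,K)\ge\rho$ ($\mu_{\rm low}(W,K)\ge\rho$), where $W=\{w_1,w_2,\dots\}$. *)

From Stdlib Require Import Reals Lia List Classical ClassicalEpsilon.
From Coquelicot Require Import Coquelicot.
Import ListNotations.
Open Scope R_scope.

Definition lang := nat -> Prop.

(* A language is an infinite subset of N. *)
Definition infinite_set (K : lang) : Prop :=
  forall m : nat, exists k : nat, (m <= k)%nat /\ K k.

(* A countable collection, presented as an enumeration L 0, L 1, ...
   of languages (repetitions allowed). *)
Definition collection := nat -> lang.

Definition is_collection (L : collection) : Prop :=
  forall i, infinite_set (L i).

(* An element-based generator: from the collection L (but not K) and the
   prefix [x_1; ...; x_n] of the enumeration it outputs w_n. *)
Definition generator := collection -> list nat -> nat.

(* Outputs are fresh: w_n is not among x_1..x_n nor w_1..w_{n-1}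
   (w_k is the output on the length-k prefix). *)
Definition element_based (G : generator) : Prop :=
  forall (L : collection) (s : list nat),
    ~ In (G L s) s /\
    (forall k, (1 <= k < length s)%nat -> G L s <> G L (firstn k s)).

(* Prefix x_1..x_{n+1} of an enumeration x : nat -> nat (0-indexed). *)
Definition prefix (x : nat -> nat) (n : nat) : list nat :=
  map x (seq 0 (S n)).

(* The output sequence w_{n+1} (0-indexed as w n). *)
Definition outputs (G : generator) (L : collection) (x : nat -> nat) : nat -> nat :=
  fun n => G L (prefix x n).

Definition memb (A : lang) (k : nat) : bool :=
  if excluded_middle_informative (A k) then true else false.

Definition incr_enum (B : lang) (b : nat -> nat) : Prop :=
  (forall n, (b n < b (S n))%nat) /\ (forall k, B k <-> exists n, b n = k).

(* (1/n) |A ∩ {b_1,...,b_n}|, indexed so that entry n corresponds to n+1. *)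
Definition dens_ratio (A : lang) (b : nat -> nat) (n : nat) : R :=
  INR (length (filter (fun i => memb A (b i)) (seq 0 (S n)))) / INR (S n).

Definition mu_up_ge (A B : lang) (rho : R) : Prop :=
  forall b, incr_enum B b -> Rbar_le (Finite rho) (LimSup_seq (dens_ratio A b)).
Definition mu_low_ge (A B : lang) (rho : R) : Prop :=
  forall b, incr_enum B b -> Rbar_le (Finite rho) (LimInf_seq (dens_ratio A b)).

Definition exact_enum (K : lang) (x : nat -> nat) : Prop :=
  (forall n m, x n = x m -> n = m) /\
  (forall n, K (x n)) /\
  (forall k, K k -> exists n, x n = k).

(* Enumeration of K with finite noise and finite omissions. *)
Definition tolerant_enum (K : lang) (x : nat -> nat) : Prop :=
  (forall n m, x n = x m -> n = m) /\
  exists Khat : lang,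
    (forall k, Khat k -> K k) /\
    (exists M, forall k, K k -> ~ Khat k -> (k < M)%nat) /\
    (forall k, Khat k -> exists n, x n = k) /\
    (exists N, forall n, (N <= n)%nat -> Khat (x n)).

Inductive dens_kind := Upper | Lower.

Definition dens_ge (d : dens_kind) (A B : lang) (rho : R) : Prop :=
  match d with Upper => mu_up_ge A B rho | Lower => mu_low_ge A B rho end.

Definition generates_with_density (Enum : lang -> (nat -> nat) -> Prop)
    (d : dens_kind) (rho : R) (G : generator) : Prop :=
  forall L : collection, is_collection L ->
  forall (i : nat) (x : nat -> nat), Enum (L i) x ->
    (exists nstar, forall n, (nstar <= n)%nat -> L i (outputs G L x n)) /\
    dens_ge d (fun w => exists n, outputs G L x n = w) (L i) rho.

(* The tolerant generator runs the vanilla one on an enlarged collection that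
   contains, for every language L_i and all finite sets A and C, the language
   (L_i \ A) ∪ C.  A tolerant enumeration of L_i whose noise lies among its
   first N terms and whose omissions form A is an exact enumeration of
   (L_i \ A) ∪ {x_1, ..., x_N}, a member of the enlarged collection.  The
   vanilla outputs eventually lie in this language, and they avoid the noise
   because an output never belongs to the prefix already seen; so they lie in
   L_i.  Densities transfer because a density relative to B only depends on B
   up to finitely many elements. *)

From Stdlib Require Import Reals Lra Lia List Classical ClassicalEpsilon Arith Wf_nat.
From Stdlib Require Import Cantor FunctionalExtensionality.
From Coquelicot Require Import Coquelicot.

Open Scope nat_scope.

Lemma ex_least_nat (P : nat -> Prop) :
  (exists n, P n) -> exists n, P n /\ forall m, P m -> n <= m.
Proof.
  intros Hex.
  destruct (dec_inh_nat_subset_has_unique_least_element P (fun n => classic (P n)) Hex)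
    as [n [[Hn Hmin] _]].
  eauto.
Qed.

Lemma memb_true (A : lang) k : memb A k = true <-> A k.
Proof.
  unfold memb; destruct (excluded_middle_informative (A k)); split; easy.
Qed.

Section StrictlyIncreasing.

Variable b : nat -> nat.
Hypothesis b_incr : forall n, b n < b (S n).

Lemma incr_le i j : i <= j -> b i <= b j.
Proof. induction 1; [lia | specialize (b_incr m); lia]. Qed.

Lemma incr_lt_inv i j : b i < b j -> i < j.
Proof.
  intros H; destruct (le_lt_dec j i) as [Hji|]; [pose proof (incr_le _ _ Hji); lia | easy].
Qed.

Lemma incr_ge_id n : n <= b n.
Proof. induction n as [|n IH]; [lia | specialize (b_incr n); lia]. Qed.

End StrictlyIncreasing.

Lemma incr_enum_le_of_subset (B B' : lang) b b' :
  incr_enum B b -> incr_enum B' b' -> (forall k, B' k -> B k) -> forall n, b n <= b' n.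
Proof.
  intros [Hb HB] [Hb' HB'] Hsub n.
  assert (Hidx : forall m, exists j, b j = b' m)
    by (intro m; apply HB, Hsub, HB'; exists m; reflexivity).
  induction n as [|n IH].
  - destruct (Hidx 0) as [j <-]. apply incr_le; [exact Hb | lia].
  - destruct (Hidx (S n)) as [j Hj]. rewrite <- Hj. apply incr_le; [exact Hb |].
    apply (incr_lt_inv b Hb). specialize (Hb' n). lia.
Qed.

Lemma incr_enum_unique (B B' : lang) b b' :
  incr_enum B b -> incr_enum B' b' -> (forall k, B k <-> B' k) -> forall n, b n = b' n.
Proof.
  intros Hb Hb' HBB' n.
  apply Nat.le_antisymm.
  - apply (incr_enum_le_of_subset B B'); auto. apply HBB'.
  - apply (incr_enum_le_of_subset B' B); auto. apply HBB'.
Qed.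

Lemma incr_enum_tail (B : lang) b T :
  incr_enum B b -> exists p, incr_enum (fun k => B k /\ T <= k) (fun n => b (n + p)).
Proof.
  intros [Hb HB].
  destruct (ex_least_nat (fun n => T <= b n)) as [p [Hp Hmin]].
  { exists T. apply incr_ge_id, Hb. }
  exists p. split; [intro n; apply Hb |]. intro k. split.
  - intros [Hk HTk]. destruct (proj1 (HB k) Hk) as [j <-].
    exists (j - p). specialize (Hmin j HTk). f_equal. lia.
  - intros [n <-]. split; [apply HB; eauto |].
    pose proof (incr_le b Hb p (n + p) ltac:(lia)). lia.
Qed.

Lemma incr_enum_align (B B' : lang) b b' T :
  incr_enum B b -> incr_enum B' b' -> (forall k, T <= k -> (B k <-> B' k)) ->
  exists p q, forall n, b (n + p) = b' (n + q).
Proof.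
  intros Hb Hb' Hag.
  destruct (incr_enum_tail B b T Hb) as [p Hp].
  destruct (incr_enum_tail B' b' T Hb') as [q Hq].
  exists p, q. apply (incr_enum_unique _ _ _ _ Hp Hq).
  intro k. split; intros [Hk HTk]; split; auto; apply (Hag k HTk); exact Hk.
Qed.

Lemma incr_enum_exists (B : lang) : infinite_set B -> exists b, incr_enum B b.
Proof.
  intros HB.
  assert (Hnext : forall lo, {k | (B k /\ lo <= k) /\ forall j, B j /\ lo <= j -> k <= j}).
  { intro lo. apply constructive_indefinite_description, ex_least_nat.
    destruct (HB lo) as [k [? ?]]. eauto. }
  set (next lo := proj1_sig (Hnext lo)).
  assert (next_in : forall lo, B (next lo)) by (intro lo; apply (proj2_sig (Hnext lo))).
  assert (next_ge : forall lo, lo <= next lo) by (intro lo; apply (proj2_sig (Hnext lo))).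
  assert (next_min : forall lo j, B j -> lo <= j -> next lo <= j)
    by (intros lo j ? ?; apply (proj2_sig (Hnext lo)); auto).
  set (b := nat_rect (fun _ => nat) (next 0) (fun _ r => next (S r))).
  assert (bS : forall n, b (S n) = next (S (b n))) by reflexivity.
  assert (Hb : forall n, b n < b (S n)) by (intro n; rewrite bS; apply next_ge).
  exists b. split; [exact Hb |]. intro k. split.
  - intros Hk.
    destruct (ex_least_nat (fun n => k <= b n)) as [n [Hkn Hmin]].
    { exists k. apply incr_ge_id, Hb. }
    exists n. apply Nat.le_antisymm; [| exact Hkn].
    destruct n as [|n].
    + apply next_min; [exact Hk | lia].
    + rewrite bS. apply next_min; [exact Hk |].
      destruct (le_lt_dec k (b n)) as [Hle|]; [specialize (Hmin n Hle); lia | lia].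
  - intros [[|n] <-]; [apply next_in | rewrite bS; apply next_in].
Qed.

(** * Densities depend only on the tail of the reference set *)

Definition count_in (A : lang) (b : nat -> nat) (m : nat) : nat :=
  length (filter (fun i => memb A (b i)) (seq 0 m)).

Lemma count_in_le A b m : count_in A b m <= m.
Proof. unfold count_in. rewrite <- (length_seq m 0) at 2. apply filter_length_le. Qed.

Lemma count_in_add A b m p :
  count_in A b (m + p) = count_in A b p + count_in A (fun i => b (i + p)) m.
Proof.
  unfold count_in. induction m as [|m IH]; [simpl; lia |].
  replace (S m + p) with (S (m + p)) by lia.
  rewrite !seq_S, !filter_app, !length_app, IH. simpl.
  destruct (memb A (b (m + p))); simpl; lia.
Qed.

Open Scope R_scope.

(* Shifting a window of length m by P or Q positions changes at most P + Q of
   the counted positions. *)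
Lemma ratio_shift_le cp cq s m P Q :
  0 <= cp <= P -> 0 <= cq <= Q -> 0 <= s <= m -> 0 < m ->
  (cp + s) / (m + P) <= (cq + s) / (m + Q) + (P + Q) / m.
Proof.
  intros. set (X := (cp + s) / (m + P)). set (Y := (cq + s) / (m + Q)).
  assert (HX : X * (m + P) = cp + s) by (unfold X; field; lra).
  assert (HY : Y * (m + Q) = cq + s) by (unfold Y; field; lra).
  assert (X0 : 0 <= X) by (apply Rdiv_le_0_compat; lra).
  assert (Y1 : Y <= 1).
  { apply Rmult_le_reg_r with (m + Q); lra. }
  assert (HXY : X * m <= Y * m + (P + Q)) by nra.
  apply Rmult_le_reg_r with m; [lra |].
  rewrite Rmult_plus_distr_r. unfold Rdiv. rewrite Rmult_assoc, Rinv_l by lra. lra.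
Qed.

Lemma dens_ratio_shift_le A b b' p q :
  (forall n, b (n + p)%nat = b' (n + q)%nat) ->
  forall n, dens_ratio A b (n + p) <= dens_ratio A b' (n + q) + INR (p + q) / INR (S n).
Proof.
  intros Hbb n. unfold dens_ratio.
  replace (S (n + p)) with (S n + p)%nat by lia.
  replace (S (n + q)) with (S n + q)%nat by lia.
  fold (count_in A b (S n + p)) (count_in A b' (S n + q)).
  rewrite !count_in_add.
  replace (fun i => b' (i + q)%nat) with (fun i => b (i + p)%nat)
    by (apply functional_extensionality; auto).
  rewrite !plus_INR.
  apply ratio_shift_le.
  - split; [apply pos_INR | apply le_INR, count_in_le].
  - split; [apply pos_INR | apply le_INR, count_in_le].
  - split; [apply pos_INR | apply le_INR, count_in_le].
  - apply lt_0_INR. lia.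
Qed.

Lemma eventually_div_INR_le c eps :
  0 <= c -> 0 < eps -> Hierarchy.eventually (fun n => c / INR (S n) <= eps).
Proof.
  intros Hc Heps.
  destruct (archimed_cor1 (eps / (c + 1))) as [N [HN HN0]].
  { apply Rdiv_lt_0_compat; lra. }
  exists N. intros n Hn.
  assert (HNn : 0 < INR N <= INR (S n)) by (split; [apply lt_0_INR | apply le_INR]; lia).
  assert (Hinv : 0 < / INR (S n) <= / INR N)
    by (split; [apply Rinv_0_lt_compat | apply Rinv_le_contravar]; lra).
  assert (Heps' : eps / (c + 1) * (c + 1) = eps) by (field; lra).
  unfold Rdiv. nra.
Qed.

Lemma LimSup_seq_plus_const u c :
  LimSup_seq (fun n => u n + c) = Rbar_plus (LimSup_seq u) c.
Proof.
  destruct (ex_LimSup_seq u) as [l H].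
  rewrite (is_LimSup_seq_unique _ _ H). apply is_LimSup_seq_unique.
  destruct l as [l| |]; simpl in *.
  - intros eps. destruct (H eps) as [H1 [N H2]]. split.
    + intros N0. destruct (H1 N0) as [n [? ?]]. exists n. split; [auto | lra].
    + exists N. intros n Hn. specialize (H2 n Hn). lra.
  - intros M N. destruct (H (M - c) N) as [n [? ?]]. exists n. split; [auto | lra].
  - intros M. destruct (H (M - c)) as [N HN]. exists N. intros n Hn. specialize (HN n Hn). lra.
Qed.

Lemma LimInf_seq_plus_const u c :
  LimInf_seq (fun n => u n + c) = Rbar_plus (LimInf_seq u) c.
Proof.
  destruct (ex_LimInf_seq u) as [l H].
  rewrite (is_LimInf_seq_unique _ _ H). apply is_LimInf_seq_unique.
  destruct l as [l| |]; simpl in *.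
  - intros eps. destruct (H eps) as [H1 [N H2]]. split.
    + intros N0. destruct (H1 N0) as [n [? ?]]. exists n. split; [auto | lra].
    + exists N. intros n Hn. specialize (H2 n Hn). lra.
  - intros M. destruct (H (M - c)) as [N HN]. exists N. intros n Hn. specialize (HN n Hn). lra.
  - intros M N. destruct (H (M - c) N) as [n [? ?]]. exists n. split; [auto | lra].
Qed.

Lemma LimSup_seq_shift u k : LimSup_seq (fun n => u (n + k)%nat) = LimSup_seq u.
Proof.
  destruct (ex_LimSup_seq u) as [l H].
  rewrite (is_LimSup_seq_unique _ _ H). apply is_LimSup_seq_unique, is_LimSup_seq_ind_k, H.
Qed.

Lemma LimInf_seq_shift u k : LimInf_seq (fun n => u (n + k)%nat) = LimInf_seq u.
Proof.
  destruct (ex_LimInf_seq u) as [l H].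
  rewrite (is_LimInf_seq_unique _ _ H). apply is_LimInf_seq_unique, is_LimInf_seq_ind_k, H.
Qed.

Lemma Rbar_le_of_le_plus_eps (r : R) l :
  (forall eps, 0 < eps -> Rbar_le r (Rbar_plus l eps)) -> Rbar_le r l.
Proof.
  intros H. destruct l as [l| |]; simpl in *; auto.
  - destruct (Rle_lt_dec r l) as [|Hlt]; auto.
    specialize (H ((r - l) / 2) ltac:(lra)). simpl in H. lra.
  - apply (H 1). lra.
Qed.

Lemma LimSup_seq_ge_transfer (r : R) u v p q :
  (forall eps, 0 < eps -> Hierarchy.eventually (fun n => u (n + p)%nat <= v (n + q)%nat + eps)) ->
  Rbar_le r (LimSup_seq u) -> Rbar_le r (LimSup_seq v).
Proof.
  intros Huv Hr. apply Rbar_le_of_le_plus_eps. intros eps Heps.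
  rewrite <- (LimSup_seq_shift v q), <- LimSup_seq_plus_const.
  rewrite <- (LimSup_seq_shift u p) in Hr.
  eapply Rbar_le_trans; [exact Hr |]. apply LimSup_le, Huv, Heps.
Qed.

Lemma LimInf_seq_ge_transfer (r : R) u v p q :
  (forall eps, 0 < eps -> Hierarchy.eventually (fun n => u (n + p)%nat <= v (n + q)%nat + eps)) ->
  Rbar_le r (LimInf_seq u) -> Rbar_le r (LimInf_seq v).
Proof.
  intros Huv Hr. apply Rbar_le_of_le_plus_eps. intros eps Heps.
  rewrite <- (LimInf_seq_shift v q), <- LimInf_seq_plus_const.
  rewrite <- (LimInf_seq_shift u p) in Hr.
  eapply Rbar_le_trans; [exact Hr |]. apply LimInf_le, Huv, Heps.
Qed.

Lemma dens_ratio_eventually_le (A B B' : lang) T b' :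
  infinite_set B -> (forall k, (T <= k)%nat -> (B k <-> B' k)) -> incr_enum B' b' ->
  exists b p q, incr_enum B b /\
    forall eps, 0 < eps -> Hierarchy.eventually
      (fun n => dens_ratio A b (n + p) <= dens_ratio A b' (n + q) + eps).
Proof.
  intros HB Hag Hb'.
  destruct (incr_enum_exists B HB) as [b Hb].
  destruct (incr_enum_align B B' b b' T Hb Hb' Hag) as [p [q Hpq]].
  exists b, p, q. split; [exact Hb |]. intros eps Heps.
  destruct (eventually_div_INR_le (INR (p + q)) eps (pos_INR _) Heps) as [N HN].
  exists N. intros n Hn. specialize (HN n Hn).
  pose proof (dens_ratio_shift_le A b b' p q Hpq n). lra.
Qed.

Lemma dens_ge_eventually_eq d (A B B' : lang) rho T :
  infinite_set B -> (forall k, (T <= k)%nat -> (B k <-> B' k)) ->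
  dens_ge d A B rho -> dens_ge d A B' rho.
Proof.
  intros HB Hag H.
  destruct d; intros b' Hb';
    destruct (dens_ratio_eventually_le A B B' T b' HB Hag Hb') as [b [p [q [Hb Hev]]]].
  - exact (LimSup_seq_ge_transfer _ _ _ p q Hev (H b Hb)).
  - exact (LimInf_seq_ge_transfer _ _ _ p q Hev (H b Hb)).
Qed.

Open Scope nat_scope.

Definition list_code (l : list nat) : nat := fold_right (fun k a => Nat.setbit a k) 0 l.

Lemma testbit_list_code l k : Nat.testbit (list_code l) k = true <-> In k l.
Proof.
  induction l as [|j l IH]; simpl.
  - rewrite Nat.bits_0. split; easy.
  - rewrite Nat.setbit_iff, IH. tauto.
Qed.

Lemma bounded_set_code (P : nat -> Prop) M :
  (forall k, P k -> k < M) -> exists a, forall k, Nat.testbit a k = true <-> P k.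
Proof.
  intros HM. exists (list_code (filter (memb P) (seq 0 M))). intro k.
  rewrite testbit_list_code, filter_In, in_seq, memb_true.
  split; [tauto |]. intro Hk. specialize (HM k Hk). repeat split; auto; lia.
Qed.

(* (K \ A) ∪ C, the finite sets A and C being given by the bits of a and c. *)
Definition patch (K : lang) (a c : nat) : lang :=
  fun k => (K k /\ Nat.testbit a k = false) \/ Nat.testbit c k = true.

Definition patched (L : collection) : collection :=
  fun n => let (i, ac) := Cantor.of_nat n in
           let (a, c) := Cantor.of_nat ac in patch (L i) a c.

Lemma patched_to_nat L i a c :
  patched L (Cantor.to_nat (i, Cantor.to_nat (a, c))) = patch (L i) a c.
Proof. unfold patched. rewrite !Cantor.cancel_of_to. reflexivity. Qed.

Lemma patch_eventually_eq K a c :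
  exists T, forall k, T <= k -> (patch K a c k <-> K k).
Proof.
  exists (S (Nat.max (Nat.log2 a) (Nat.log2 c))). intros k Hk. unfold patch.
  rewrite !Nat.bits_above_log2 by lia.
  split; [intros [[? _] | ?]; easy | auto].
Qed.

Lemma infinite_set_patch K a c : infinite_set K -> infinite_set (patch K a c).
Proof.
  intros HK m. destruct (patch_eventually_eq K a c) as [T HT].
  destruct (HK (Nat.max m T)) as [k [Hk HKk]].
  exists k. split; [lia | apply HT; [lia | exact HKk]].
Qed.

Lemma is_collection_patched L : is_collection L -> is_collection (patched L).
Proof.
  intros HL n. unfold patched.
  destruct (Cantor.of_nat n) as [i ac], (Cantor.of_nat ac) as [a c].
  apply infinite_set_patch, HL.
Qed.

Lemma in_prefix x m n : m <= n -> In (x m) (prefix x n).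
Proof. intros. apply in_map, in_seq. lia. Qed.

Lemma tolerant_enum_exact_patch K x :
  tolerant_enum K x ->
  exists a c N, exact_enum (patch K a c) x /\
    forall k n, Nat.testbit c k = true -> N <= n -> In k (prefix x n).
Proof.
  intros [Hinj [Khat [Hsub [[M HM] [Hen [N HN]]]]]].
  destruct (bounded_set_code (fun k => K k /\ ~ Khat k) M) as [a Ha].
  { intros k [? ?]. auto. }
  exists a, (list_code (map x (seq 0 N))), N. split; [split; [exact Hinj | split] |].
  - intro n. unfold patch. rewrite testbit_list_code. destruct (le_lt_dec N n).
    + left. split; [apply Hsub, HN; lia |].
      destruct (Nat.testbit a (x n)) eqn:Hbit; [| reflexivity].
      exfalso. apply Ha in Hbit. apply Hbit, HN. lia.
    + right. apply in_map, in_seq. lia.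
  - intros k [[HKk Hak] | Hck].
    + destruct (classic (Khat k)) as [Hk | Hk]; [apply Hen, Hk |].
      assert (Nat.testbit a k = true) by (apply Ha; auto). congruence.
    + apply testbit_list_code, in_map_iff in Hck. destruct Hck as [n [<- _]]. eauto.
  - intros k n Hck HNn.
    apply testbit_list_code, in_map_iff in Hck. destruct Hck as [m [<- Hm]].
    apply in_seq in Hm. apply in_prefix. lia.
Qed.

Lemma element_based_patched (Gv : generator) :
  element_based Gv -> element_based (fun L => Gv (patched L)).
Proof. intros HGe L. apply HGe. Qed.

Lemma generates_tolerant_of_exact d rho (Gv : generator) :
  element_based Gv -> generates_with_density exact_enum d rho Gv ->
  generates_with_density tolerant_enum d rho (fun L => Gv (patched L)).
Proof.
  intros HGe HG L HL i x Hx.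
  destruct (tolerant_enum_exact_patch _ _ Hx) as [a [c [N [Hex Hnoise]]]].
  rewrite <- patched_to_nat in Hex.
  destruct (HG _ (is_collection_patched L HL) _ _ Hex) as [[nstar Hns] Hd].
  rewrite patched_to_nat in Hns, Hd.
  split.
  - exists (Nat.max nstar N). intros n Hn.
    destruct (Hns n ltac:(lia)) as [[HLi _] | Hc]; [exact HLi |].
    exfalso. apply (proj1 (HGe (patched L) (prefix x n))), Hnoise; [exact Hc | lia].
  - destruct (patch_eventually_eq (L i) a c) as [T HT].
    exact (dens_ge_eventually_eq d _ _ _ rho T (infinite_set_patch _ a c (HL i)) HT Hd).
Qed.

Open Scope R_scope.

Theorem theorem6p17 (rho_up rho_low : R) :
  0 <= rho_up <= 1 -> 0 <= rho_low <= 1 ->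
  ((exists Gv : generator, element_based Gv /\
       generates_with_density exact_enum Upper rho_up Gv) ->
   exists Gt : generator, element_based Gt /\
       generates_with_density tolerant_enum Upper rho_up Gt) /\
  ((exists Gv : generator, element_based Gv /\
       generates_with_density exact_enum Lower rho_low Gv) ->
   exists Gt : generator, element_based Gt /\
       generates_with_density tolerant_enum Lower rho_low Gt).
Proof.
  intros _ _.
  split; intros [Gv [HGe HG]]; exists (fun L => Gv (patched L));
    split; auto using element_based_patched, generates_tolerant_of_exact.
Qed.
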